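(* Let $\mathcal{X}$ be a nonempty subset of $\mathbb{R}^n$ and $\mathbf{F}:\mathcal{X}\to I(\mathbb{R})$ an interval-valued function such that \[\mathbf{F}(x)\ominus_{gH}\mathbf{F}(y)\preceq\mathbf{C}\odot\|x-y\|\quad\text{for all }x,y\in\mathcal{X},\] where $\mathbf{C}=[c,c]$ with $c\in\mathbb{R}$. Then $\|\mathbf{F}(x)\ominus_{gH}\mathbf{F}(y)\|_{I(\mathbb{R})}\le c\|x-y\|$ for all $x,y\in\mathcal{X}$.
   Context: $I(\mathbb{R})$: nonempty compact intervals $\mathbf{A}=[\underline{a},\overline{a}]$; $\lambda\odot\mathbf{A}=[\min\{\lambda\underline{a},\lambda\overline{a}\},\max\{\lambda\underline{a},\lambda\overline{a}\}]$; $\mathbf{A}\ominus_{gH}\mathbf{B}=[\min\{\underline{a}-\underline{b},\overline{a}-\overline{b}\},\max\{\underline{a}-\underline{b},\overline{a}-\overline{b}\}]$; $\mathbf{A}\preceq\mathbf{B}$ iff $\underline{a}\le\underline{b}$ and $\overline{a}\le\overline{b}$; $\|\mathbf{A}\|_{I(\mathbb{R})}=\max\{|\underline{a}|,|\overline{a}|\}$; $\|\cdot\|$ Euclidean norm. *)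

From HB Require Import structures.
From mathcomp Require Import all_boot all_order all_algebra.
From mathcomp Require Import reals.
Set Implicit Arguments. Unset Strict Implicit. Unset Printing Implicit Defensive.
Import Order.TTheory GRing.Theory Num.Theory.
Local Open Scope ring_scope.

Record Ival (R : realType) := Itv {
  lo : R ; hi : R ; itv_ok : lo <= hi }.
Arguments Itv {R}.

Lemma minr_le_maxr (R : realType) (a b : R) : Order.min a b <= Order.max a b.
Proof. by rewrite ge_min le_max lexx. Qed.

Definition iscale (R : realType) (lam : R) (A : Ival R) : Ival R :=
  Itv (Order.min (lam * lo A) (lam * hi A)) (Order.max (lam * lo A) (lam * hi A))
      (minr_le_maxr _ _).

Definition gHdiff (R : realType) (A B : Ival R) : Ival R :=
  Itv (Order.min (lo A - lo B) (hi A - hi B)) (Order.max (lo A - lo B) (hi A - hi B))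
      (minr_le_maxr _ _).

Definition ile (R : realType) (A B : Ival R) : Prop :=
  lo A <= lo B /\ hi A <= hi B.

Definition inorm (R : realType) (A : Ival R) : R :=
  Order.max `|lo A| `|hi A|.

Definition ipt (R : realType) (c : R) : Ival R := Itv c c (lexx c).

Definition enorm (R : realType) (n : nat) (x : 'rV[R]_n) : R :=
  Num.sqrt (\sum_(i < n) x ord0 i ^+ 2).

(* Only the upper endpoints of the hypothesis matter: applied to (x, y) and to
   (y, x), and using F y ⊖gH F x = -(F x ⊖gH F y), it bounds both the upper
   endpoint and the negated lower endpoint of F x ⊖gH F y by c ||x - y||, and
   these two numbers are exactly what the norm of an interval measures. *)
From HB Require Import structures.
From mathcomp Require Import all_boot all_order all_algebra.
From mathcomp Require Import reals lra.
Import Order.TTheory GRing.Theory Num.Theory.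
Local Open Scope ring_scope.

Section IntervalArithmetic.
Variable R : realType.
Implicit Types (A B : Ival R) (c lam : R).

Lemma hi_iscale_ipt lam c : hi (iscale lam (ipt c)) = lam * c.
Proof. by rewrite /= maxxx. Qed.

Lemma hi_gHdiffC A B : hi (gHdiff B A) = - lo (gHdiff A B).
Proof. by rewrite /= oppr_min !opprB. Qed.

Lemma inorm_le A c : (inorm A <= c) = (- lo A <= c) && (hi A <= c).
Proof.
have lohi := itv_ok A.
rewrite ge_max !ler_norml; apply/andP/andP => [[/andP[? ?] /andP[? ?]] | [? ?]].
  by split; lra.
by split; apply/andP; split; lra.
Qed.

End IntervalArithmetic.

Lemma enormC (R : realType) (n : nat) (x y : 'rV[R]_n) :
  enorm (y - x) = enorm (x - y).
Proof.
rewrite /enorm; congr Num.sqrt; apply: eq_bigr => i _.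
by rewrite !mxE -sqrrN opprB.
Qed.

Theorem mainTheorem13 (R : realType) (n : nat) (X : 'rV[R]_n -> Prop)
  (F : 'rV[R]_n -> Ival R) (c : R) :
  (exists x0, X x0) ->
  (forall x y, X x -> X y ->
     ile (gHdiff (F x) (F y)) (iscale (enorm (x - y)) (ipt c))) ->
  forall x y, X x -> X y ->
    inorm (gHdiff (F x) (F y)) <= c * enorm (x - y).
Proof.
move=> _ lipF x y Xx Xy.
have [_ hi_xy] := lipF x y Xx Xy.
have [_ hi_yx] := lipF y x Xy Xx.
rewrite hi_iscale_ipt mulrC in hi_xy.
rewrite hi_iscale_ipt enormC mulrC in hi_yx.
by rewrite inorm_le -hi_gHdiffC hi_xy hi_yx.
Qed.
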